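(* Let $f$ be a periodic traveling wave of speed $c$ with $c\neq0$ and $c^2\neq 1$. If $\lambda\in\mathbb{R}\setminus\{0\}$ belongs to $\sigma(\mathrm{P})$, then one of the Floquet multipliers $\rho$ of (P) at $\lambda$ satisfies $\rho^2=1$.
   Context: A traveling wave of speed $c$ is a real solution $f$ of $(c^2-1)f''+\sin f=0$, with energy $E$ given by $\tfrac12(c^2-1)(f')^2+1-\cos f=E$; periodic traveling waves are librational ($0<E<2$) or rotational ($E<0$ if $c^2<1$, $E>2$ if $c^2>1$), with fundamental period $T$ (smallest $T>0$ with $f(z+T)=f(z)\pmod{2\pi}$). Let $\gamma=1/(c^2-1)$. Equation (P): $p''-2c\gamma\lambda p'+\gamma(\lambda^2+\cos f(z))p=0$, written as a first-order system for $(p,p')$; its monodromy matrix is $F(T;\lambda)$ where $F$ is the fundamental matrix with $F(0;\lambda)=I$, and its Floquet multipliers are the eigenvalues of the monodromy matrix. $\sigma(\mathrm{P})$ is the set of $\lambda\in\mathbb{C}$ for which (P) has a nontrivial solution bounded on $\mathbb{R}$. *)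

From Stdlib Require Import Reals ZArith.
From Coquelicot Require Import Coquelicot.
Open Scope R_scope.

Definition gam (c : R) : R := / (c ^ 2 - 1).

Definition traveling_wave (c : R) (f : R -> R) : Prop :=
  exists f1 f2 : R -> R,
    forall z, is_derive f z (f1 z) /\ is_derive f1 z (f2 z) /\
              (c ^ 2 - 1) * f2 z + sin (f z) = 0.

Definition period_mod_2pi (f : R -> R) (T : R) : Prop :=
  forall z, exists k : Z, f (z + T) = f z + 2 * PI * IZR k.

Definition fundamental_period (f : R -> R) (T : R) : Prop :=
  0 < T /\ period_mod_2pi f T /\
  forall T', 0 < T' < T -> ~ period_mod_2pi f T'.

(* periodic traveling wave of speed c with fundamental period T
   (covers both librational and rotational waves) *)
Definition periodic_traveling_wave (c : R) (f : R -> R) (T : R) : Prop :=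
  traveling_wave c f /\ fundamental_period f T.

Definition P_rhs (c : R) (f : R -> R) (lam : C) (z : R) (p p1 : C) : C :=
  Cminus (Cmult (RtoC (2 * c * gam c)) (Cmult lam p1))
         (Cmult (RtoC (gam c)) (Cmult (Cplus (Cmult lam lam) (RtoC (cos (f z)))) p)).

Definition solves_P (c : R) (f : R -> R) (lam : C) (p : R -> C) : Prop :=
  exists p1 p2 : R -> C,
    forall z, is_derive p z (p1 z) /\ is_derive p1 z (p2 z) /\
              p2 z = P_rhs c f lam z (p z) (p1 z).

Definition in_sigmaP (c : R) (f : R -> R) (lam : C) : Prop :=
  exists p : R -> C, solves_P c f lam p /\
    (exists z, p z <> RtoC 0) /\
    (exists M : R, forall z, Cmod (p z) <= M).

(* F = [[F11, F12], [F21, F22]] is the fundamental matrix of the first-order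
   system for (p, p'), i.e. F' = A(z) F with A = [[0, 1], [-gamma(lam^2+cos f), 2 c gamma lam]],
   and F(0) = I. *)
Definition fundamental_matrix (c : R) (f : R -> R) (lam : C)
    (F11 F12 F21 F22 : R -> C) : Prop :=
  (forall z,
      is_derive F11 z (F21 z) /\ is_derive F21 z (P_rhs c f lam z (F11 z) (F21 z)) /\
      is_derive F12 z (F22 z) /\ is_derive F22 z (P_rhs c f lam z (F12 z) (F22 z))) /\
  F11 0 = RtoC 1 /\ F12 0 = RtoC 0 /\ F21 0 = RtoC 0 /\ F22 0 = RtoC 1.

Definition is_eigenvalue2 (a b d e rho : C) : Prop :=
  Cminus (Cmult (Cminus a rho) (Cminus e rho)) (Cmult b d) = RtoC 0.

(* For real [lam] the equation (P) is a real linear equation y'' = a y' - b(z) y with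
   a = 2 c gam lam <> 0 and b T-periodic, so its monodromy matrix M is real and, by
   Liouville's formula, det M = exp (a T) <> 1.  By Cayley-Hamilton every solution obeys
   y(z + 2T) = tr M * y(z + T) - det M * y(z).  If neither 1 nor -1 is a multiplier, the
   characteristic roots of this recurrence lie off the unit circle and a bounded solution
   of it vanishes; applied to the real and imaginary parts of a bounded solution of (P)
   this contradicts [lam] being in sigma(P). *)

From Stdlib Require Import Reals ZArith Lra Psatz.
From Coquelicot Require Import Coquelicot.
Open Scope R_scope.

Lemma is_derive_eq (f : R -> R) (x d d' : R) : is_derive f x d -> d = d' -> is_derive f x d'.
Proof. now intros H <-. Qed.

Lemma is_derive_square (f : R -> R) (x d : R) :
  is_derive f x d -> is_derive (fun x => f x * f x) x (2 * f x * d).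
Proof.
  intros H. apply is_derive_eq with (d * f x + f x * d); [|ring].
  now apply Derive.is_derive_mult.
Qed.

Lemma is_derive_exp_mul (k x : R) : is_derive (fun x => exp (k * x)) x (k * exp (k * x)).
Proof.
  apply is_derive_eq with (scal k (exp (k * x))); [|reflexivity].
  apply (is_derive_comp exp (fun x => k * x)); [apply is_derive_exp|].
  apply is_derive_eq with (k * 1); [apply is_derive_scal, (is_derive_id x) | ring].
Qed.

Lemma is_derive_shift (f : R -> R) (x s d : R) :
  is_derive f (x + s) d -> is_derive (fun x => f (x + s)) x d.
Proof.
  intros H. apply is_derive_eq with (scal 1 d); [|apply (scal_one (K := R_Ring))].
  apply (is_derive_comp f (fun x => x + s) x d 1 H).
  apply is_derive_eq with (1 + 0); [|ring].
  apply (is_derive_plus (fun x => x) (fun _ => s)); [apply (is_derive_id x) | apply (is_derive_const s x)].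
Qed.

Lemma is_derive_reflect (f : R -> R) (x d : R) :
  is_derive f (- x) d -> is_derive (fun x => f (- x)) x (- d).
Proof.
  intros H. apply is_derive_eq with (scal (opp one) d); [|now rewrite scal_opp_one].
  apply (is_derive_comp f Ropp x d (opp one) H).
  apply (is_derive_opp (fun x : R => x)), (is_derive_id x).
Qed.

Lemma is_derive_fst (p : R -> C) (z : R) (d : C) :
  is_derive p z d -> is_derive (fun x => fst (p x)) z (fst d).
Proof.
  intros H. apply (filterdiff_comp p (fun u : C => fst u) (fun y => scal y d) (fun u : C => fst u) H).
  apply filterdiff_linear.
  apply (is_linear_fst (K := R_AbsRing) (U := R_NormedModule) (V := R_NormedModule)).
Qed.

Lemma is_derive_snd (p : R -> C) (z : R) (d : C) :
  is_derive p z d -> is_derive (fun x => snd (p x)) z (snd d).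
Proof.
  intros H. apply (filterdiff_comp p (fun u : C => snd u) (fun y => scal y d) (fun u : C => snd u) H).
  apply filterdiff_linear.
  apply (is_linear_snd (K := R_AbsRing) (U := R_NormedModule) (V := R_NormedModule)).
Qed.

Lemma antitone_of_is_derive_nonpos (phi dphi : R -> R) (a b : R) :
  (forall z, is_derive phi z (dphi z)) -> (forall z, dphi z <= 0) -> a <= b -> phi b <= phi a.
Proof.
  intros hd hneg hab.
  destruct (MVT_gen phi a b dphi) as [c [_ hc]].
  - intros x _. apply hd.
  - intros x _. apply continuity_pt_filterlim, (ex_derive_continuous phi x).
    eexists; apply hd.
  - pose proof (hneg c). nra.
Qed.

(* [E * exp (- K z)] is nonincreasing, hence stays at 0 to the right of [z0]. *)
Lemma gronwall_vanish_right (E e : R -> R) (K z0 : R) :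
  (forall z, is_derive E z (e z)) -> (forall z, 0 <= E z) ->
  (forall z, e z <= K * E z) -> E z0 = 0 -> forall z, z0 <= z -> E z = 0.
Proof.
  intros hd hpos hle h0 z hz.
  assert (hdec : E z * exp (- K * z) <= E z0 * exp (- K * z0)).
  { apply (antitone_of_is_derive_nonpos (fun x => E x * exp (- K * x))
             (fun x => e x * exp (- K * x) + E x * (- K * exp (- K * x)))); [| |exact hz].
    - intro x. apply (Derive.is_derive_mult E (fun x => exp (- K * x))); [apply hd | apply (is_derive_exp_mul (- K) x)].
    - intro x. pose proof (hle x). pose proof (exp_pos (- K * x)). nra. }
  rewrite h0, Rmult_0_l in hdec.
  pose proof (exp_pos (- K * z)). pose proof (hpos z). nra.
Qed.

Lemma gronwall_vanish (E e : R -> R) (K z0 : R) :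
  (forall z, is_derive E z (e z)) -> (forall z, 0 <= E z) ->
  (forall z, Rabs (e z) <= K * E z) -> E z0 = 0 -> forall z, E z = 0.
Proof.
  intros hd hpos hle h0 z.
  destruct (Rle_dec z0 z) as [hz|hz].
  - apply (gronwall_vanish_right E e K z0); auto.
    intro x. pose proof (Rle_abs (e x)). pose proof (hle x). lra.
  - replace z with (- - z) by ring.
    apply (gronwall_vanish_right (fun x => E (- x)) (fun x => - e (- x)) K (- z0)); try lra.
    + intro x. apply is_derive_reflect, hd.
    + intro x. apply hpos.
    + intro x. pose proof (Rle_abs (- e (- x))). rewrite Rabs_Ropp in *.
      pose proof (hle (- x)). lra.
    + now rewrite Ropp_involutive.
Qed.

Lemma is_derive_linear_exp (W : R -> R) (a : R) :
  (forall z, is_derive W z (a * W z)) -> W 0 = 1 -> forall z, W z = exp (a * z).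
Proof.
  intros hd h0 z.
  set (D := fun z => W z - exp (a * z)).
  assert (hD : forall x, is_derive D x (a * D x)).
  { intro x. apply is_derive_eq with (a * W x - a * exp (a * x)); [|unfold D; ring].
    apply (is_derive_minus W (fun x => exp (a * x))); [apply hd | apply (is_derive_exp_mul a x)]. }
  assert (hD0 : D z * D z = 0).
  { apply (gronwall_vanish (fun x => D x * D x) (fun x => 2 * D x * (a * D x)) (2 * Rabs a) 0).
    - intro x. apply is_derive_square, hD.
    - intro x. nra.
    - intro x. replace (2 * D x * (a * D x)) with (a * (2 * (D x * D x))) by ring.
      rewrite Rabs_mult, (Rabs_pos_eq (2 * _)) by nra. lra.
    - unfold D. rewrite h0, Rmult_0_r, exp_0. ring. }
  unfold D in hD0. nra.
Qed.

Lemma shift_iter (g : R -> R) (T r : R) : (forall z, g (z + T) = r * g z) ->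
  forall n z, g (z + INR n * T) = r ^ n * g z.
Proof.
  intros h n. induction n as [|n IH]; intro z.
  - simpl. rewrite Rmult_0_l, Rplus_0_r. ring.
  - rewrite S_INR. replace (z + (INR n + 1) * T) with (z + INR n * T + T) by ring.
    rewrite h, IH. simpl. ring.
Qed.

Lemma bounded_geometric_eq0 (g : R -> R) (T r M : R) :
  (forall z, Rabs (g z) <= M) -> (forall z, g (z + T) = r * g z) -> Rabs r <> 1 ->
  forall z, g z = 0.
Proof.
  intros hM hg hr z.
  destruct (Req_dec (g z) 0) as [|hz]; [assumption | exfalso].
  assert (hgz : 0 < Rabs (g z)) by now apply Rabs_pos_lt.
  destruct (Rlt_le_dec 1 (Rabs r)) as [hbig|hsmall].
  - destruct (Pow_x_infinity r hbig (M / Rabs (g z) + 1)) as [N hN].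
    specialize (hN N (le_n N)).
    pose proof (hM (z + INR N * T)) as hb.
    rewrite (shift_iter g T r hg), Rabs_mult in hb.
    assert (Rabs (r ^ N) * Rabs (g z) >= (M / Rabs (g z) + 1) * Rabs (g z))
      by (apply Rmult_ge_compat_r; lra).
    assert ((M / Rabs (g z) + 1) * Rabs (g z) = M + Rabs (g z)) by (field; lra).
    lra.
  - assert (hMpos : 0 < M) by (pose proof (hM z); lra).
    destruct (pow_lt_1_zero r ltac:(lra) (Rabs (g z) / (2 * M))) as [N hN].
    { apply Rdiv_lt_0_compat; lra. }
    specialize (hN N (le_n N)).
    pose proof (shift_iter g T r hg N (z - INR N * T)) as he.
    replace (z - INR N * T + INR N * T) with z in he by ring.
    pose proof (hM (z - INR N * T)) as hb.
    rewrite he, Rabs_mult in hgz.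
    assert (Rabs (r ^ N) * Rabs (g (z - INR N * T)) <= Rabs (g z) / (2 * M) * M)
      by (apply Rmult_le_compat; auto using Rabs_pos; lra).
    assert (Rabs (g z) / (2 * M) * M = Rabs (g z) / 2) by (field; lra).
    rewrite he, Rabs_mult in *. lra.
Qed.

Lemma Rabs_root_neq1 (t D r : R) :
  r * r - t * r + D = 0 -> 1 - t + D <> 0 -> 1 + t + D <> 0 -> Rabs r <> 1.
Proof.
  intros hr h1 h2 habs.
  destruct (Rcase_abs r) as [hneg|hpos].
  - rewrite Rabs_left in habs by assumption. apply h2. nra.
  - rewrite Rabs_right in habs by assumption. apply h1. nra.
Qed.

Lemma bounded_recurrence_eq0_real_roots (y : R -> R) (T r1 r2 M : R) :
  (forall z, Rabs (y z) <= M) ->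
  (forall z, y (z + T + T) = (r1 + r2) * y (z + T) - r1 * r2 * y z) ->
  Rabs r1 <> 1 -> Rabs r2 <> 1 -> forall z, y z = 0.
Proof.
  intros hM hrec h1 h2.
  apply (bounded_geometric_eq0 y T r1 M hM); [|exact h1].
  intro z. enough (y (z + T) - r1 * y z = 0) by lra. revert z.
  apply (bounded_geometric_eq0 (fun z => y (z + T) - r1 * y z) T r2 (M + Rabs r1 * M));
    [| |exact h2].
  - intro z. unfold Rminus. eapply Rle_trans; [apply Rabs_triang|].
    rewrite Rabs_Ropp, Rabs_mult.
    apply Rplus_le_compat; [apply hM | apply Rmult_le_compat_l; [apply Rabs_pos | apply hM]].
  - intro z. rewrite hrec. ring.
Qed.

(* [Q z = |y (z + T) - r y z|^2] for a complex root [r], so [Q] is positive definite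
   and is multiplied by [D = |r|^2] under the shift. *)
Lemma bounded_recurrence_eq0_complex_roots (y : R -> R) (T t D M : R) :
  (forall z, Rabs (y z) <= M) ->
  (forall z, y (z + T + T) = t * y (z + T) - D * y z) ->
  t * t < 4 * D -> D <> 1 -> forall z, y z = 0.
Proof.
  intros hM hrec hdisc hD1.
  set (Q := fun z => y (z + T) * y (z + T) - t * (y (z + T) * y z) + D * (y z * y z)).
  assert (hprod : forall u v, Rabs (y u * y v) <= M * M).
  { intros u v. rewrite Rabs_mult. apply Rmult_le_compat; auto using Rabs_pos. }
  assert (hQ : forall z, Q z = 0).
  { apply (bounded_geometric_eq0 Q T D (M * M + Rabs t * (M * M) + D * (M * M))).
    - intro z. unfold Q, Rminus. eapply Rle_trans; [apply Rabs_triang|].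
      eapply Rle_trans; [apply Rplus_le_compat_r, Rabs_triang|].
      rewrite Rabs_Ropp, (Rabs_mult t), (Rabs_mult D), (Rabs_pos_eq D) by nra.
      apply Rplus_le_compat; [apply Rplus_le_compat|].
      + apply hprod.
      + apply Rmult_le_compat_l; [apply Rabs_pos | apply hprod].
      + apply Rmult_le_compat_l; [nra | apply hprod].
    - intro z. unfold Q. rewrite hrec. ring.
    - rewrite Rabs_pos_eq; nra. }
  intro z. specialize (hQ z). unfold Q in hQ.
  assert (hsq : (2 * y (z + T) - t * y z) * (2 * y (z + T) - t * y z)
                + (4 * D - t * t) * (y z * y z) = 0) by nra.
  pose proof (Rle_0_sqr (2 * y (z + T) - t * y z)). pose proof (Rle_0_sqr (y z)).
  unfold Rsqr in *.
  apply Rsqr_0_uniq, (Rmult_eq_reg_l (4 * D - t * t)); unfold Rsqr; nra.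
Qed.

Lemma bounded_recurrence_eq0 (y : R -> R) (T t D M : R) :
  (forall z, Rabs (y z) <= M) ->
  (forall z, y (z + T + T) = t * y (z + T) - D * y z) ->
  D <> 1 -> 1 - t + D <> 0 -> 1 + t + D <> 0 -> forall z, y z = 0.
Proof.
  intros hM hrec hD1 h1 h2.
  destruct (Rlt_le_dec (t * t) (4 * D)) as [hdisc|hdisc].
  - exact (bounded_recurrence_eq0_complex_roots y T t D M hM hrec hdisc hD1).
  - set (s := sqrt (t * t - 4 * D)).
    assert (hs : s * s = t * t - 4 * D) by (apply sqrt_sqrt; lra).
    apply (bounded_recurrence_eq0_real_roots y T ((t + s) / 2) ((t - s) / 2) M hM).
    + intro z. rewrite hrec. f_equal; [f_equal; field | f_equal; nra].
    + apply (Rabs_root_neq1 t D); nra.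
    + apply (Rabs_root_neq1 t D); nra.
Qed.

Lemma energy_derivative_bound (a b B y y1 : R) : Rabs b <= B ->
  Rabs (2 * y * y1 + 2 * y1 * (a * y1 - b * y)) <= (1 + B + 2 * Rabs a) * (y * y + y1 * y1).
Proof.
  intros hB. apply Rabs_le.
  pose proof (Rle_abs a) as ha1. pose proof (Rle_abs (- a)) as ha2.
  pose proof (Rle_abs b) as hb1. pose proof (Rle_abs (- b)) as hb2.
  rewrite Rabs_Ropp in ha2, hb2.
  pose proof (Rle_0_sqr (y + y1)). pose proof (Rle_0_sqr (y - y1)). pose proof (Rle_0_sqr y1).
  unfold Rsqr in *.
  split; nra.
Qed.

Section LinearODE.

Variables (a : R) (b : R -> R).

Definition ode_solution (y y1 : R -> R) : Prop :=
  forall z, is_derive y z (y1 z) /\ is_derive y1 z (a * y1 z - b z * y z).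

Lemma ode_solution_lin (y y1 w w1 : R -> R) (k l : R) :
  ode_solution y y1 -> ode_solution w w1 ->
  ode_solution (fun z => k * y z + l * w z) (fun z => k * y1 z + l * w1 z).
Proof.
  intros hy hw z. destruct (hy z) as [dy dy1], (hw z) as [dw dw1]. split.
  - apply (is_derive_plus (fun z => k * y z) (fun z => l * w z)); now apply is_derive_scal.
  - apply is_derive_eq with (k * (a * y1 z - b z * y z) + l * (a * w1 z - b z * w z)); [|ring].
    apply (is_derive_plus (fun z => k * y1 z) (fun z => l * w1 z)); now apply is_derive_scal.
Qed.

Lemma ode_solution_shift (y y1 : R -> R) (T : R) : (forall z, b (z + T) = b z) ->
  ode_solution y y1 -> ode_solution (fun z => y (z + T)) (fun z => y1 (z + T)).
Proof.
  intros hb hy z. destruct (hy (z + T)) as [dy dy1]. rewrite hb in dy1.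
  split; now apply is_derive_shift.
Qed.

Variable B : R.
Hypothesis b_bounded : forall z, Rabs (b z) <= B.

Lemma ode_solution_unique (y y1 : R -> R) (z0 : R) :
  ode_solution y y1 -> y z0 = 0 -> y1 z0 = 0 -> forall z, y z = 0 /\ y1 z = 0.
Proof.
  intros hs h0 h1 z.
  assert (hE : y z * y z + y1 z * y1 z = 0).
  { apply (gronwall_vanish (fun z => y z * y z + y1 z * y1 z)
             (fun z => 2 * y z * y1 z + 2 * y1 z * (a * y1 z - b z * y z))
             (1 + B + 2 * Rabs a) z0).
    - intro x. destruct (hs x) as [dy dy1].
      apply (is_derive_plus (fun z => y z * y z) (fun z => y1 z * y1 z));
        now apply is_derive_square.
    - intro x. nra.
    - intro x. apply energy_derivative_bound, b_bounded.
    - rewrite h0, h1. ring. }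
  split; nra.
Qed.

Variables X11 X12 X21 X22 : R -> R.

Definition fundamental_system : Prop :=
  ode_solution X11 X21 /\ ode_solution X12 X22 /\
  X11 0 = 1 /\ X12 0 = 0 /\ X21 0 = 0 /\ X22 0 = 1.

Hypothesis hX : fundamental_system.

Lemma ode_solution_repr (y y1 : R -> R) : ode_solution y y1 ->
  forall z, y z = y 0 * X11 z + y1 0 * X12 z /\ y1 z = y 0 * X21 z + y1 0 * X22 z.
Proof.
  destruct hX as [h1 [h2 [e11 [e12 [e21 e22]]]]].
  intros hy z.
  pose proof (ode_solution_lin _ _ _ _ (y 0) (y1 0) h1 h2) as hcomb.
  pose proof (ode_solution_lin _ _ _ _ 1 (-1) hy hcomb) as hdiff.
  destruct (ode_solution_unique _ _ 0 hdiff) with (z := z) as [u u1]; cbv beta in *.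
  - rewrite e11, e12. ring.
  - rewrite e21, e22. ring.
  - split; lra.
Qed.

(* Liouville: the Wronskian satisfies W' = a W, a being the trace of the system matrix. *)
Lemma wronskian_exp : forall z, X11 z * X22 z - X12 z * X21 z = exp (a * z).
Proof.
  destruct hX as [h1 [h2 [e11 [e12 [e21 e22]]]]].
  apply is_derive_linear_exp.
  - intro z. destruct (h1 z) as [d11 d21], (h2 z) as [d12 d22].
    apply is_derive_eq with
      ((X21 z * X22 z + X11 z * (a * X22 z - b z * X12 z))
       - (X22 z * X21 z + X12 z * (a * X21 z - b z * X11 z))); [|ring].
    apply (is_derive_minus (fun z => X11 z * X22 z) (fun z => X12 z * X21 z));
      now apply Derive.is_derive_mult.
  - rewrite e11, e12, e21, e22. ring.
Qed.

Variable T : R.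
Hypothesis b_periodic : forall z, b (z + T) = b z.

(* Cayley-Hamilton for the monodromy matrix [X(T)], read off along every solution. *)
Lemma ode_solution_recurrence (y y1 : R -> R) : ode_solution y y1 ->
  forall z, y (z + T + T) = (X11 T + X22 T) * y (z + T) - exp (a * T) * y z.
Proof.
  intros hy z.
  pose proof (ode_solution_shift _ _ T b_periodic hy) as hy1.
  pose proof (ode_solution_shift _ _ T b_periodic hy1) as hy2.
  destruct (ode_solution_repr _ _ hy2 z) as [r2 _].
  destruct (ode_solution_repr _ _ hy1 z) as [r1 _].
  destruct (ode_solution_repr _ _ hy1 T) as [r1T r1T'].
  destruct (ode_solution_repr _ _ hy z) as [r0 _].
  destruct (ode_solution_repr _ _ hy T) as [r0T r0T'].
  cbv beta in *. rewrite !Rplus_0_l in *.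
  rewrite r2, r1T, r1T', r1, r0, r0T, r0T', <- wronskian_exp. ring.
Qed.

End LinearODE.

Definition P_damping (c lam : R) : R := 2 * c * gam c * lam.

Definition P_potential (c : R) (f : R -> R) (lam z : R) : R := gam c * (lam * lam + cos (f z)).

Definition P_system (c : R) (f : R -> R) (lam : C) (p p1 : R -> C) : Prop :=
  forall z, is_derive p z (p1 z) /\ is_derive p1 z (P_rhs c f lam z (p z) (p1 z)).

Lemma P_damping_neq0 (c lam : R) : c <> 0 -> c ^ 2 <> 1 -> lam <> 0 -> P_damping c lam <> 0.
Proof.
  intros hc hc1 hlam. unfold P_damping, gam.
  assert (/ (c ^ 2 - 1) <> 0) by (apply Rinv_neq_0_compat; lra).
  repeat apply Rmult_integral_contrapositive_currified; lra.
Qed.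

Lemma P_potential_bounded (c : R) (f : R -> R) (lam z : R) :
  Rabs (P_potential c f lam z) <= Rabs (gam c) * (lam * lam + 1).
Proof.
  unfold P_potential. rewrite Rabs_mult. apply Rmult_le_compat_l; [apply Rabs_pos|].
  pose proof (COS_bound (f z)). apply Rabs_le. nra.
Qed.

Lemma cos_plus_2PI_IZR (x : R) (k : Z) : cos (x + 2 * PI * IZR k) = cos x.
Proof.
  rewrite cos_plus.
  assert (hs : sin (2 * PI * IZR k) = 0)
    by (apply sin_eq_0_1; exists (2 * k)%Z; rewrite mult_IZR; ring).
  assert (hc : cos (2 * PI * IZR k) = 1).
  { replace (2 * PI * IZR k) with (2 * (PI * IZR k)) by ring.
    rewrite cos_2a_sin.
    assert (sin (PI * IZR k) = 0) by (apply sin_eq_0_1; exists k; ring).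
    nra. }
  rewrite hs, hc. ring.
Qed.

Lemma P_potential_periodic (c : R) (f : R -> R) (lam T : R) :
  period_mod_2pi f T -> forall z, P_potential c f lam (z + T) = P_potential c f lam z.
Proof.
  intros hp z. destruct (hp z) as [k hk]. unfold P_potential. now rewrite hk, cos_plus_2PI_IZR.
Qed.

Lemma P_rhs_fst (c : R) (f : R -> R) (lam z : R) (p p1 : C) :
  fst (P_rhs c f (RtoC lam) z p p1) = P_damping c lam * fst p1 - P_potential c f lam z * fst p.
Proof.
  destruct p, p1. unfold P_rhs, P_damping, P_potential, Cminus, Cmult, Cplus, Copp, RtoC.
  simpl. ring.
Qed.

Lemma P_rhs_snd (c : R) (f : R -> R) (lam z : R) (p p1 : C) :
  snd (P_rhs c f (RtoC lam) z p p1) = P_damping c lam * snd p1 - P_potential c f lam z * snd p.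
Proof.
  destruct p, p1. unfold P_rhs, P_damping, P_potential, Cminus, Cmult, Cplus, Copp, RtoC.
  simpl. ring.
Qed.

Section RealSpectralParameter.

Variables (c : R) (f : R -> R) (lam : R).

Lemma P_system_re (p p1 : R -> C) : P_system c f (RtoC lam) p p1 ->
  ode_solution (P_damping c lam) (P_potential c f lam)
    (fun z => fst (p z)) (fun z => fst (p1 z)).
Proof.
  intros hp z. destruct (hp z) as [dp dp1]. split.
  - now apply is_derive_fst.
  - rewrite <- P_rhs_fst. now apply is_derive_fst.
Qed.

Lemma P_system_im (p p1 : R -> C) : P_system c f (RtoC lam) p p1 ->
  ode_solution (P_damping c lam) (P_potential c f lam)
    (fun z => snd (p z)) (fun z => snd (p1 z)).
Proof.
  intros hp z. destruct (hp z) as [dp dp1]. split.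
  - now apply is_derive_snd.
  - rewrite <- P_rhs_snd. now apply is_derive_snd.
Qed.

Lemma P_system_real_valued (p p1 : R -> C) : P_system c f (RtoC lam) p p1 ->
  snd (p 0) = 0 -> snd (p1 0) = 0 ->
  forall z, p z = RtoC (fst (p z)) /\ p1 z = RtoC (fst (p1 z)).
Proof.
  intros hp h0 h1 z.
  destruct (ode_solution_unique _ _ _ (P_potential_bounded c f lam) _ _ 0 (P_system_im _ _ hp)
              h0 h1 z) as [him him1].
  cbv beta in him, him1. destruct (p z), (p1 z). simpl in *. now rewrite him, him1.
Qed.

Lemma fundamental_matrix_columns (F11 F12 F21 F22 : R -> C) :
  fundamental_matrix c f (RtoC lam) F11 F12 F21 F22 ->
  P_system c f (RtoC lam) F11 F21 /\ P_system c f (RtoC lam) F12 F22.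
Proof.
  intros [hd _]. split; intro z; destruct (hd z) as [? [? [? ?]]]; now split.
Qed.

Lemma fundamental_matrix_re (F11 F12 F21 F22 : R -> C) :
  fundamental_matrix c f (RtoC lam) F11 F12 F21 F22 ->
  fundamental_system (P_damping c lam) (P_potential c f lam)
    (fun z => fst (F11 z)) (fun z => fst (F12 z)) (fun z => fst (F21 z)) (fun z => fst (F22 z)).
Proof.
  intros hF. destruct (fundamental_matrix_columns _ _ _ _ hF) as [h1 h2].
  destruct hF as [_ [e11 [e12 [e21 e22]]]].
  split; [apply (P_system_re _ _ h1)|]. split; [apply (P_system_re _ _ h2)|].
  cbv beta. now rewrite e11, e12, e21, e22.
Qed.

Lemma fundamental_matrix_real_valued (F11 F12 F21 F22 : R -> C) :
  fundamental_matrix c f (RtoC lam) F11 F12 F21 F22 -> forall z,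
  F11 z = RtoC (fst (F11 z)) /\ F12 z = RtoC (fst (F12 z)) /\
  F21 z = RtoC (fst (F21 z)) /\ F22 z = RtoC (fst (F22 z)).
Proof.
  intros hF z. destruct (fundamental_matrix_columns _ _ _ _ hF) as [h1 h2].
  destruct hF as [_ [e11 [e12 [e21 e22]]]].
  destruct (P_system_real_valued _ _ h1) with (z := z) as [r11 r21];
    [now rewrite e11 | now rewrite e21 |].
  destruct (P_system_real_valued _ _ h2) with (z := z) as [r12 r22];
    [now rewrite e12 | now rewrite e22 |].
  auto.
Qed.

Lemma in_sigmaP_real_solution : in_sigmaP c f (RtoC lam) ->
  exists (y y1 : R -> R) (M z0 : R),
    ode_solution (P_damping c lam) (P_potential c f lam) y y1 /\
    (forall z, Rabs (y z) <= M) /\ y z0 <> 0.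
Proof.
  intros [p [[p1 [p2 hp]] [[z0 hz0] [M hM]]]].
  assert (hsys : P_system c f (RtoC lam) p p1).
  { intro z. destruct (hp z) as [? [? e]]. rewrite <- e. now split. }
  assert (hre : forall z, Rabs (fst (p z)) <= M).
  { intro z. eapply Rle_trans; [|apply (hM z)].
    eapply Rle_trans; [apply Rmax_l | apply Rmax_Cmod]. }
  assert (him : forall z, Rabs (snd (p z)) <= M).
  { intro z. eapply Rle_trans; [|apply (hM z)].
    eapply Rle_trans; [apply Rmax_r | apply Rmax_Cmod]. }
  destruct (Req_dec (fst (p z0)) 0) as [h0|h0].
  - exists (fun z => snd (p z)), (fun z => snd (p1 z)), M, z0.
    split; [now apply P_system_im|]. split; [exact him|].
    intro h1. apply hz0. destruct (p z0). simpl in *. now rewrite h0, h1.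
  - exists (fun z => fst (p z)), (fun z => fst (p1 z)), M, z0.
    split; [now apply P_system_re|]. now split.
Qed.

End RealSpectralParameter.

Lemma eigenvalue2_real (x11 x12 x21 x22 r : R) :
  r * r - (x11 + x22) * r + (x11 * x22 - x12 * x21) = 0 ->
  is_eigenvalue2 (RtoC x11) (RtoC x12) (RtoC x21) (RtoC x22) (RtoC r).
Proof.
  intros h. unfold is_eigenvalue2, Cminus, Cmult, Copp, Cplus, RtoC. simpl.
  f_equal; lra.
Qed.

Theorem lemma3p5 (c : R) (f : R -> R) (T : R) (lam : R)
  (hc0 : c <> 0) (hc1 : c ^ 2 <> 1)
  (hf : periodic_traveling_wave c f T)
  (hlam0 : lam <> 0)
  (hsig : in_sigmaP c f (RtoC lam))
  (F11 F12 F21 F22 : R -> C)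
  (hF : fundamental_matrix c f (RtoC lam) F11 F12 F21 F22) :
  exists rho : C,
    is_eigenvalue2 (F11 T) (F12 T) (F21 T) (F22 T) rho /\ Cmult rho rho = RtoC 1.
Proof.
  destruct hf as [_ [hT [hper _]]].
  set (a := P_damping c lam). set (b := P_potential c f lam).
  pose proof (fundamental_matrix_re c f lam _ _ _ _ hF) as hX.
  destruct (fundamental_matrix_real_valued c f lam _ _ _ _ hF T) as [-> [-> [-> ->]]].
  pose proof (wronskian_exp a b _ _ _ _ hX T) as hdet.
  set (t := fst (F11 T) + fst (F22 T)). set (D := exp (a * T)).
  assert (hmult : forall r, r * r = 1 -> 1 - r * t + D = 0 ->
    exists rho, is_eigenvalue2 (RtoC (fst (F11 T))) (RtoC (fst (F12 T)))
                  (RtoC (fst (F21 T))) (RtoC (fst (F22 T))) rho /\ Cmult rho rho = RtoC 1).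
  { intros r hr hroot. exists (RtoC r). split.
    - apply eigenvalue2_real. unfold t, D in *. lra.
    - unfold Cmult, RtoC. simpl. f_equal; lra. }
  destruct (Req_dec (1 - t + D) 0) as [h1|h1]; [apply (hmult 1); lra|].
  destruct (Req_dec (1 + t + D) 0) as [h2|h2]; [apply (hmult (-1)); lra|].
  exfalso.
  assert (hD1 : D <> 1).
  { intro e. apply (Rmult_integral_contrapositive_currified a T);
      [now apply P_damping_neq0 | lra |].
    apply exp_inv. now rewrite exp_0. }
  destruct (in_sigmaP_real_solution c f lam hsig) as [y [y1 [M [z0 [hy [hM hz0]]]]]].
  apply hz0, (bounded_recurrence_eq0 y T t D M hM); try assumption.
  exact (ode_solution_recurrence a b _ (P_potential_bounded c f lam) _ _ _ _ hX T
           (P_potential_periodic c f lam T hper) y y1 hy).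
Qed.
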